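(* Let $\mathcal G=(\mathcal V,\mathcal E,w)$ be a finite, undirected, connected graph with $n\ge2$ vertices and positive edge weights, and let $\hat L$ be its normalized Laplacian. Let $w_1,\dots,w_r$ be the pairwise distinct values taken by the weights of those $(m,k)$-stars of $\mathcal G$ whose weight is defined, and for each $i$ let $\mathcal S_{w_i}$ be the set of $(m,k)$-stars of $\mathcal G$ of weight $w_i$, with $\deg(\mathcal S_{w_i})=\sum_{S_{m,k}\in\mathcal S_{w_i}}(m-1)$. If $r\ge1$, then $1$ is an eigenvalue of $\hat L$ with algebraic multiplicity at least $\sum_{i=1}^r\deg(\mathcal S_{w_i})$.
   Context: Weighted adjacency matrix: $A_{ij}=w(i,j)$ if $\{i,j\}\in\mathcal E$, else $0$; strength $s(i)=\sum_jA_{ij}$. The normalized Laplacian has entries $\hat L_{ii}=1$, $\hat L_{ij}=-w(i,j)/\sqrt{s(i)s(j)}$ if $i\sim j$, and $0$ otherwise. An $(m,k)$-star of $\mathcal G$ is a pair $(\mathcal V_1,\mathcal V_2)$ of disjoint vertex sets with $|\mathcal V_1|=m\ge2$, $|\mathcal V_2|=k$, $m+k\le n$, such that every vertex of $\mathcal V_1$ is adjacent to every vertex of $\mathcal V_2$ and to no vertex outside $\mathcal V_2$; the sets are uniquely determined, i.e. $\mathcal V_1$ is the set of all vertices whose neighbourhood is exactly $\mathcal V_2$. Its degree is $m-1$. Its weight is defined only when $w(i,j)=w(i',j)$ for all $i,i'\in\mathcal V_1$, $j\in\mathcal V_2$, and then equals $\sum_{j\in\mathcal V_2}w(i,j)$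 for any $i\in\mathcal V_1$. *)

From HB Require Import structures.
From mathcomp Require Import all_boot all_order all_algebra.
Set Implicit Arguments. Unset Strict Implicit. Unset Printing Implicit Defensive.
Import Order.TTheory GRing.Theory Num.Theory.
Local Open Scope ring_scope.

(* A weighted simple graph on vertex set 'I_n is given by a weight function
   w : 'I_n -> 'I_n -> R; {i,j} is an edge iff w i j != 0. *)

Section Graph.
Variables (R : rcfType) (n : nat) (w : 'I_n -> 'I_n -> R).

Definition adjb (i j : 'I_n) : bool := w i j != 0.

Definition weighted_simple_graph : Prop :=
  [/\ forall i j, w i j = w j i, forall i, w i i = 0 & forall i j, 0 <= w i j].

Definition connected_graph : Prop := forall i j, connect adjb i j.

Definition adjmx : 'M[R]_n := \matrix_(i, j) (if adjb i j then w i j else 0).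
Definition strength (i : 'I_n) : R := \sum_j adjmx i j.

Definition norm_laplacian : 'M[R]_n :=
  \matrix_(i, j) (if i == j then 1
                  else if adjb i j then - (w i j / Num.sqrt (strength i * strength j))
                  else 0).

Definition nbhd (i : 'I_n) : {set 'I_n} := [set j | adjb i j].

(* (m,k)-star (V1,V2) with m = #|V1|, k = #|V2| *)
Definition is_star (V1 V2 : {set 'I_n}) : bool :=
  [&& (2 <= #|V1|)%N, [disjoint V1 & V2], (#|V1| + #|V2| <= n)%N,
      [forall i in V1, nbhd i == V2] &
      [forall i, (nbhd i == V2) ==> (i \in V1)]].

Definition star_weight_defined (V1 V2 : {set 'I_n}) : bool :=
  [forall i in V1, forall i' in V1, forall j in V2, w i j == w i' j].

(* weight of a star: sum_{j in V2} w(i,j) for (any/some) i in V1 *)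
Definition star_weight (p : {set 'I_n} * {set 'I_n}) : R :=
  if [pick i in p.1] is Some i then \sum_(j in p.2) w i j else 0.

Definition weighted_stars : {set {set 'I_n} * {set 'I_n}} :=
  [set p | is_star p.1 p.2 && star_weight_defined p.1 p.2].

Definition star_weight_values : seq R :=
  undup [seq star_weight p | p in weighted_stars].

Definition deg_stars_of_weight (x : R) : nat :=
  (\sum_(p in weighted_stars | star_weight p == x) (#|p.1| - 1))%N.

End Graph.

(** If (V1, V2) is a star with defined weight, any two vertices
    i, i' of V1 have the same neighbours, the same weights towards them and
    hence the same strength, so the rows i and i' of the normalized Laplacian
    minus the identity coincide: e_i - e_i' is a left eigenvector for the
    eigenvalue 1.  Subtracting, inside every V1, the row of a fixed
    representative from the other m - 1 rows is a unitriangular row operation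
    on 'X I - L which exposes a factor 'X - 1 in each of those rows.  Distinct
    stars have disjoint V1's, since V1 is the set of all vertices whose
    neighbourhood is V2, so ('X - 1)^(sum (m - 1)) divides the characteristic
    polynomial. *)

From mathcomp Require Import all_boot all_order all_algebra ring.
Set Implicit Arguments. Unset Strict Implicit. Unset Printing Implicit Defensive.
Import Order.TTheory GRing.Theory Num.Theory.
Local Open Scope ring_scope.

Section CharPolyEqualRows.
Variables (R : fieldType) (n : nat) (A : 'M[R]_n) (a : R).
Variables (c : 'I_n -> 'I_n) (K : {set 'I_n}).
Hypothesis c_lt : forall i, i \in K -> (c i < i)%N.
Hypothesis rows_eq : forall i j, i \in K ->
  A i j - a *+ (i == j) = A (c i) j - a *+ (c i == j).

Local Notation M := (char_poly_mx A).

Let E : 'M[{poly R}]_n :=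
  \matrix_(i, j) ((i == j)%:R - ((i \in K) && (j == c i))%:R).
Let D : 'M[{poly R}]_n :=
  \matrix_(i, j) (if i \in K then (i == j)%:R - (c i == j)%:R else M i j).
Let d : 'rV[{poly R}]_n := \row_i (if i \in K then 'X - a%:P else 1).

Lemma char_poly_mxE i j : M i j = 'X *+ (i == j) - (A i j)%:P.
Proof. by rewrite !mxE. Qed.

Lemma char_poly_mx_rowB i j : i \in K ->
  M i j - M (c i) j = ('X - a%:P) * ((i == j)%:R - (c i == j)%:R).
Proof.
move=> iK; rewrite !char_poly_mxE.
have -> : A i j = A (c i) j - a *+ (c i == j) + a *+ (i == j).
  by rewrite -rows_eq // subrK.
rewrite polyCD polyCB !polyCMn.
by case: (i == j); case: (c i == j); rewrite /= ?mulr1n ?mulr0n; ring.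
Qed.

Lemma det_row_op : \det E = 1.
Proof.
have c_ltO i : i \in K -> (c i < i)%O by move/c_lt.
rewrite det_trig; last first.
  apply/is_trig_mxP => i j ltij; rewrite mxE (lt_eqF (ltij : (i < j)%O)).
  case: (boolP (i \in K)) => iK; last by rewrite subrr.
  by rewrite (gt_eqF (lt_trans (c_ltO i iK) ltij)) subrr.
rewrite big1 // => i _; rewrite mxE eqxx.
by case: (boolP (i \in K)) => [/c_ltO/gt_eqF -> | _]; rewrite subr0.
Qed.

Lemma row_op_char_poly_mx : E *m M = diag_mx d *m D.
Proof.
apply/matrixP => i j.
rewrite mul_diag_mx [LHS]mxE [RHS]mxE [d _ _]mxE [D _ _]mxE.
under eq_bigr => k _ do rewrite mxE mulrBl.
rewrite sumrB (bigD1 i) //= eqxx mul1r big1 ?addr0; last first.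
  by move=> k /negbTE; rewrite eq_sym => ->; rewrite mul0r.
case: (boolP (i \in K)) => iK /=; last first.
  by rewrite big1 ?subr0 ?mul1r // => k _; rewrite mul0r.
rewrite (bigD1 (c i)) //= eqxx mul1r big1 ?addr0 ?char_poly_mx_rowB //.
by move=> k /negbTE ->; rewrite mul0r.
Qed.

Lemma XsubC_expK_dvd_char_poly : ('X - a%:P) ^+ #|K| %| char_poly A.
Proof.
have -> : char_poly A = \det (E *m M) by rewrite det_mulmx det_row_op mul1r.
rewrite row_op_char_poly_mx det_mulmx det_diag.
under eq_bigr => i _ do rewrite mxE.
by rewrite -big_mkcond /= prodr_const dvdp_mulIl.
Qed.

Lemma card_le_mup_char_poly : (#|K| <= mup a (char_poly A))%N.
Proof.
by rewrite mup_geq ?XsubC_expK_dvd_char_poly // monic_neq0 // char_poly_monic.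
Qed.

End CharPolyEqualRows.

Section WeightedStars.
Variables (R : rcfType) (n : nat) (w : 'I_n -> 'I_n -> R).

Local Notation S := (weighted_stars w).
Local Notation L := (norm_laplacian w).

Lemma weighted_starP p : p \in S -> [/\ (2 <= #|p.1|)%N, [disjoint p.1 & p.2],
   forall i, (i \in p.1) = (nbhd w i == p.2) &
   forall i i' j, i \in p.1 -> i' \in p.1 -> j \in p.2 -> w i j = w i' j].
Proof.
rewrite inE => /andP[/and5P[m_ge2 disj _ /forall_inP nbhdE /forallP V1E] defw].
split=> // [i | i i' j iV1 i'V1 jV2].
  by apply/idP/idP => [/nbhdE | /(implyP (V1E i))].
move/forall_inP: defw => /(_ i iV1)/forall_inP/(_ i' i'V1).
by move/forall_inP/(_ j jV2)/eqP.
Qed.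

Lemma weighted_star_nbhd p i : p \in S -> i \in p.1 -> nbhd w i = p.2.
Proof. by case/weighted_starP => _ _ V1E _; rewrite V1E => /eqP. Qed.

Lemma weighted_star_uniq p q i : p \in S -> q \in S -> i \in p.1 -> i \in q.1 ->
  p = q.
Proof.
move=> pS qS ip iq.
have eq2 : p.2 = q.2.
  by rewrite -(weighted_star_nbhd pS ip) (weighted_star_nbhd qS iq).
have eq1 : p.1 = q.1.
  apply/setP => j.
  case: (weighted_starP pS) (weighted_starP qS) => _ _ -> _ [_ _ -> _].
  by rewrite eq2.
by rewrite [p]surjective_pairing [q]surjective_pairing eq1 eq2.
Qed.

Section OneStar.
Variables (p : {set 'I_n} * {set 'I_n}) (i i' : 'I_n).
Hypotheses (pS : p \in S) (ip : i \in p.1) (i'p : i' \in p.1).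

Lemma weighted_star_adj j : adjb w i j = adjb w i' j.
Proof.
by rewrite -!(in_set (adjb w _)) -!/(nbhd w _) !(weighted_star_nbhd pS).
Qed.

Lemma weighted_star_adjF : adjb w i i' = false.
Proof.
case: (weighted_starP pS) => _ disj _ _.
rewrite -(in_set (adjb w i)) -/(nbhd w i) (weighted_star_nbhd pS ip).
exact: disjointFr disj i'p.
Qed.

Lemma weighted_star_weight j : adjb w i j -> w i j = w i' j.
Proof.
case: (weighted_starP pS) => _ _ _ defw adj_ij; apply: defw => //.
by rewrite -(weighted_star_nbhd pS ip) inE.
Qed.

Lemma weighted_star_strength : strength w i = strength w i'.
Proof.
apply: eq_bigr => j _; rewrite !mxE weighted_star_adj.
by case: ifP => // adj_ij; rewrite weighted_star_weight // weighted_star_adj.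
Qed.

End OneStar.

Lemma norm_laplacian_subI_star p i j : p \in S -> i \in p.1 ->
  L i j - (i == j)%:R =
  if adjb w i j then - (w i j / Num.sqrt (strength w i * strength w j)) else 0.
Proof.
move=> pS ip; rewrite mxE; case: eqP => [<- | _]; last by rewrite subr0.
by rewrite (weighted_star_adjF pS ip ip) subrr.
Qed.

Lemma norm_laplacian_star_rows p i i' j : p \in S -> i \in p.1 -> i' \in p.1 ->
  L i j - (i == j)%:R = L i' j - (i' == j)%:R.
Proof.
move=> pS ip i'p; rewrite !(norm_laplacian_subI_star _ pS) //.
rewrite (weighted_star_adj pS ip i'p) (weighted_star_strength pS ip i'p).
case: ifP => // adj_i'j.
by rewrite (weighted_star_weight pS ip i'p) ?(weighted_star_adj pS ip i'p).
Qed.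

(* For [i] in no star, [star_of i] is empty and the arg min defaults to [i],
   so [star_nonreps] consists exactly of the non-minimal vertices of the V1's. *)
Definition star_of i := odflt (set0, set0) [pick p in S | i \in p.1].
Definition star_rep i : 'I_n := [arg min_(j < i in (star_of i).1) j]%N.
Definition star_nonreps : {set 'I_n} := [set i | star_rep i != i].

Lemma star_ofE p i : p \in S -> i \in p.1 -> star_of i = p.
Proof.
move=> pS ip; rewrite /star_of; case: pickP => [q /andP[qS iq] | /(_ p)].
  exact: weighted_star_uniq iq ip.
by rewrite pS ip.
Qed.

Lemma star_repP p i : p \in S -> i \in p.1 ->
  star_rep i \in p.1 /\ forall j, j \in p.1 -> (star_rep i <= j)%N.
Proof.
move=> pS ip; rewrite /star_rep (star_ofE pS ip).
by case: arg_minnP => // r.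
Qed.

Lemma star_rep_eq p i j : p \in S -> i \in p.1 -> j \in p.1 ->
  star_rep i = star_rep j.
Proof.
move=> pS ip jp.
have [ri min_i] := star_repP pS ip; have [rj min_j] := star_repP pS jp.
by apply/val_inj/eqP; rewrite /= eqn_leq min_i // min_j.
Qed.

Lemma star_nonrepsP i : i \in star_nonreps -> exists2 p, p \in S & i \in p.1.
Proof.
rewrite inE /star_rep /star_of.
case: pickP => [p /andP[pS ip] _ | _]; first by exists p.
by rewrite /arg_min /extremum; case: pickP => [j /andP[] | _]; rewrite ?inE ?eqxx.
Qed.

Lemma star_rep_lt i : i \in star_nonreps -> (star_rep i < i)%N.
Proof.
move=> iK; have [p pS ip] := star_nonrepsP iK; have [_ min_i] := star_repP pS ip.
by rewrite ltn_neqAle val_eqE; move: iK; rewrite inE => -> /=; apply: min_i.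
Qed.

Lemma sum_star_deg_le_card_nonreps :
  (\sum_(p in S) (#|p.1| - 1) <= #|star_nonreps|)%N.
Proof.
rewrite -sum1_card (partition_big star_of (mem S)) /=; last first.
  by move=> i /star_nonrepsP[p pS ip]; rewrite (star_ofE pS ip).
apply: leq_sum => q qS; rewrite sum1dep_card.
case: (weighted_starP qS) => m_ge2 _ _ _.
have [i iq] : exists i, i \in q.1 by apply/card_gt0P; apply: leq_trans m_ge2.
have [rq _] := star_repP qS iq.
rewrite [#|q.1|](cardsD1 (star_rep i)) rq add1n subn1 /=.
apply/subset_leq_card/subsetP => j; rewrite !inE => /andP[rj jq].
by rewrite (star_ofE qS jq) eqxx andbT (star_rep_eq qS jq iq) eq_sym.
Qed.

Lemma sum_star_weight_values :
  (\sum_(x <- star_weight_values w) deg_stars_of_weight w x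
   = \sum_(p in S) (#|p.1| - 1))%N.
Proof.
rewrite /deg_stars_of_weight.
under eq_bigr => x _ do rewrite big_mkcondr /=.
rewrite exchange_big /=; apply: eq_bigr => p pS.
rewrite -big_mkcond big_const_seq /=.
have -> : count (fun x => star_weight w p == x) (star_weight_values w) = 1%N.
  rewrite (@eq_count _ _ (pred1 (star_weight w p))) => [|x]; last first.
    by rewrite /= eq_sym.
  by rewrite count_uniq_mem ?undup_uniq // mem_undup image_f.
by rewrite /= addn0.
Qed.

End WeightedStars.

Unset Implicit Arguments.
Theorem corollary2 (R : rcfType) (n : nat) (w : 'I_n -> 'I_n -> R) :
  (2 <= n)%N ->
  weighted_simple_graph w ->
  connected_graph w ->
  (1 <= size (star_weight_values w))%N ->
  root (char_poly (norm_laplacian w)) 1 /\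
  (\sum_(x <- star_weight_values w) deg_stars_of_weight w x
     <= mup 1 (char_poly (norm_laplacian w)))%N.
Proof.
move=> _ _ _ has_star.
have le_mup : (\sum_(x <- star_weight_values w) deg_stars_of_weight w x
               <= mup 1 (char_poly (norm_laplacian w)))%N.
  rewrite sum_star_weight_values (leq_trans (sum_star_deg_le_card_nonreps w)) //.
  apply: card_le_mup_char_poly (@star_rep_lt _ _ w) _.
  move=> i j /star_nonrepsP[p pS ip].
  exact: norm_laplacian_star_rows pS ip (star_repP pS ip).1.
split=> //.
have [p pS] : exists p, p \in weighted_stars w.
  apply/card_gt0P; apply: leq_trans has_star _.
  by rewrite (leq_trans (size_undup _)) ?size_image.
have deg_gt0 : (0 < \sum_(x <- star_weight_values w) deg_stars_of_weight w x)%N.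
  case: (weighted_starP pS) => m_ge2 _ _ _.
  by rewrite sum_star_weight_values (bigD1 p) //= addn_gt0 subn_gt0 m_ge2.
rewrite -dvdp_XsubCl -[_ - _]expr1 -mup_geq ?monic_neq0 ?char_poly_monic //.
exact: leq_trans deg_gt0 le_mup.
Qed.
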